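(* Let $\mathrm W_\Omega$ be the Whitney decomposition of $\Omega=\mathbb G\setminus\mathbb A$ into dyadic rectangles as described below. For $Q\in\mathrm W_\Omega$ let $Q^*$ be the union of all rectangles of $\mathrm W_\Omega$ touching $Q$, and $Q^{**}$ the union of all rectangles of $\mathrm W_\Omega$ touching $Q^*$. Then there are $L\ge1$ and $N'\in\mathbb N$ such that for every $Q\in\mathrm W_\Omega$ the set $Q^{**}$, with the metric $d_{cc}$, admits an $L$-bi-Lipschitz embedding into $\mathbb R^{N'}$.
   Context: The Grushin plane $\mathbb G$ is $\mathbb R^2$ with horizontal distribution spanned by $X_1=\partial_x$ and $X_2=x\,\partial_y$, with Carnot–Carathéodory distance $d_{cc}$ (infimum of $\int_0^1\sqrt{a^2+b^2}\,dt$ over absolutely continuous curves $(\mathrm x,\mathrm y)$ with $\mathrm x'=a$, $\mathrm y'=\mathrm x\,b$ joining the points). $\mathbb A=\{0\}\times\mathbb R$. $\mathrm W_\Omega$ is a family of rectangles from the meshes $M_j=2^{-j}M_0\times2^{-2j}M_0$ ($M_0$ the unit square lattice mesh, so $M_j$ consists of rectangles $[2^{-j}m,2^{-j}(m+1)]\times[2^{-2j}n,2^{-2j}(n+1)]$), with union $\Omega=\mathbb G\setminus\mathbb A$, pairwise disjoint interiors, and $\operatorname{dist}_{cc}(Q,\mathbb A)\le\operatorname{diam}_{cc}(Q)\le 8\operatorname{dist}_{cc}(Q,\mathbb A)$. *)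

From Stdlib Require Import Reals Lra List ClassicalEpsilon.
Open Scope R_scope.

Definition pt := (R * R)%type.

(* Infimum / supremum of a set of reals (chosen by classical choice; they
   are only used for sets where they exist). *)
Definition is_lower_bound (E : R -> Prop) (m : R) : Prop := forall x, E x -> m <= x.
Definition is_glb (E : R -> Prop) (m : R) : Prop :=
  is_lower_bound E m /\ (forall b, is_lower_bound E b -> b <= m).
Definition Rinf (E : R -> Prop) : R := epsilon (inhabits 0) (fun m => is_glb E m).
Definition Rsup (E : R -> Prop) : R := epsilon (inhabits 0) (fun m => is_lub E m).

Definition horizontal_length (p q : pt) (l : R) : Prop :=
  exists (a b X Y : R -> R),
    continuity a /\ continuity b /\
    (forall t, derivable_pt_lim X t (a t)) /\
    (forall t, derivable_pt_lim Y t (X t * b t)) /\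
    X 0 = fst p /\ Y 0 = snd p /\ X 1 = fst q /\ Y 1 = snd q /\
    exists pr : Riemann_integrable (fun t => sqrt (a t ^ 2 + b t ^ 2)) 0 1,
      RiemannInt pr = l.

Definition dcc (p q : pt) : R := Rinf (horizontal_length p q).

Definition in_A (p : pt) : Prop := fst p = 0.

(* Dyadic rectangles of the meshes M_j = 2^-j M0 x 2^-2j M0, indexed by
   (j, m, n) in Z^3:  [2^-j m, 2^-j (m+1)] x [2^-2j n, 2^-2j (n+1)]. *)
Definition rindex := (Z * Z * Z)%type.
Definition sx (i : rindex) : R := powerRZ 2 (- fst (fst i)).
Definition sy (i : rindex) : R := powerRZ 2 (- 2 * fst (fst i)).
Definition in_rect (i : rindex) (p : pt) : Prop :=
  sx i * IZR (snd (fst i)) <= fst p <= sx i * (IZR (snd (fst i)) + 1) /\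
  sy i * IZR (snd i) <= snd p <= sy i * (IZR (snd i) + 1).
Definition in_rect_interior (i : rindex) (p : pt) : Prop :=
  sx i * IZR (snd (fst i)) < fst p < sx i * (IZR (snd (fst i)) + 1) /\
  sy i * IZR (snd i) < snd p < sy i * (IZR (snd i) + 1).

Definition diam_cc (S : pt -> Prop) : R :=
  Rsup (fun d => exists p q, S p /\ S q /\ d = dcc p q).
Definition dist_cc (S T : pt -> Prop) : R :=
  Rinf (fun d => exists p q, S p /\ T q /\ d = dcc p q).

Definition whitney_family (W : rindex -> Prop) : Prop :=
  (forall p : pt, ~ in_A p <-> exists i, W i /\ in_rect i p) /\
  (forall i k p, W i -> W k -> i <> k ->
     in_rect_interior i p -> in_rect_interior k p -> False) /\
  (forall i, W i ->
     dist_cc (in_rect i) in_A <= diam_cc (in_rect i) /\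
     diam_cc (in_rect i) <= 8 * dist_cc (in_rect i) in_A).

(* Q* : union of rectangles of W touching (= intersecting) the set S. *)
Definition touching_union (W : rindex -> Prop) (S : pt -> Prop) (p : pt) : Prop :=
  exists k, W k /\ (exists z, in_rect k z /\ S z) /\ in_rect k p.
Definition Qstar (W : rindex -> Prop) (i : rindex) : pt -> Prop :=
  touching_union W (in_rect i).
Definition Qstarstar (W : rindex -> Prop) (i : rindex) : pt -> Prop :=
  touching_union W (Qstar W i).

(* Euclidean distance in R^N (vectors as nat -> R, coordinates 0..N-1). *)
Definition eucl_dist (N : nat) (u v : nat -> R) : R :=
  sqrt (fold_right Rplus 0 (map (fun k => (u k - v k) ^ 2) (seq 0 N))).

Definition bilipschitz_embedding (L : R) (N : nat) (S : pt -> Prop)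
  (f : pt -> nat -> R) : Prop :=
  forall p q, S p -> S q ->
    / L * dcc p q <= eucl_dist N (f p) (f q) /\
    eucl_dist N (f p) (f q) <= L * dcc p q.

(* Because the Whitney condition dist <= diam holds for every rectangle of W,
   the rectangles of W are exactly those of the form [s, 2s] x [y0, y0 + s^2]
   or its mirror image, with s = 2^-j: a rectangle meeting A would contain
   points of A, which W must avoid, and one lying farther out would be
   farther from A than its diameter.  Hence Q** lies on one side of A in a box
   s/4 <= |x| <= 8s, |y - y0| <= 21 s^2.  There the map (x, y) |-> (x, y/s)
   is 17-bi-Lipschitz: an explicit curve with x' and b constant gives the
   upper bound, and any horizontal curve of length l satisfies |dx| <= l and
   |dy| <= (|x0| + l) l, which gives the lower bound. *)

From Stdlib Require Import Reals Lra Lia ClassicalEpsilon.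
From Coquelicot Require Import Coquelicot.
Open Scope R_scope.

Lemma ex_RInt_of_continuous (f : R -> R) (u v : R) :
  (forall t, continuous f t) -> ex_RInt f u v.
Proof. intro Hf. apply (@ex_RInt_continuous R_CompleteNormedModule); auto. Qed.

Lemma abs_sub_le_RInt (F f g : R -> R) (u v : R) : u <= v ->
  (forall t, derivable_pt_lim F t (f t)) ->
  (forall t, continuous f t) -> (forall t, continuous g t) ->
  (forall t, u <= t <= v -> Rabs (f t) <= g t) ->
  Rabs (F v - F u) <= RInt g u v.
Proof.
  intros Huv HF Hf Hg Hfg.
  assert (HFTC : RInt f u v = F v - F u).
  { apply is_RInt_unique, (is_RInt_derive F f).
    - intros t _. apply is_derive_Reals, HF.
    - intros t _. apply Hf. }
  rewrite <- HFTC.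
  apply Rle_trans with (RInt (fun t => Rabs (f t)) u v).
  - apply abs_RInt_le; [exact Huv | apply ex_RInt_of_continuous, Hf].
  - apply RInt_le; [exact Huv | | apply ex_RInt_of_continuous, Hg | intros; apply Hfg; lra].
    apply ex_RInt_of_continuous. intro t. apply continuous_comp; [apply Hf | apply continuous_Rabs].
Qed.

Lemma RInt_le_of_nonneg (g : R -> R) (u t v : R) : u <= t <= v ->
  (forall x, continuous g x) -> (forall x, 0 <= g x) -> RInt g u t <= RInt g u v.
Proof.
  intros Ht Hg Hg0.
  rewrite <- (RInt_Chasles g u t v) by apply ex_RInt_of_continuous, Hg.
  assert (0 <= RInt g t v) by (apply RInt_ge_0; [lra | apply ex_RInt_of_continuous, Hg | auto]).
  change (RInt g u t <= RInt g u t + RInt g t v). lra.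
Qed.

Lemma continuous_speed (a b : R -> R) : continuity a -> continuity b ->
  forall t, continuous (fun t => sqrt (a t ^ 2 + b t ^ 2)) t.
Proof.
  intros Ha Hb t. apply continuity_pt_filterlim.
  apply (continuity_pt_comp (fun t => a t ^ 2 + b t ^ 2) sqrt).
  - apply continuity_pt_plus; apply continuity_pt_comp with (f2 := fun u => u ^ 2); auto;
      apply derivable_continuous_pt, derivable_pt_pow.
  - apply continuity_pt_sqrt. nra.
Qed.

Lemma horizontal_length_bounds (p q : pt) (l : R) : horizontal_length p q l ->
  0 <= l /\ Rabs (fst q - fst p) <= l /\
  Rabs (snd q - snd p) <= (Rabs (fst p) + l) * l.
Proof.
  intros (a & b & X & Y & Ha & Hb & HX & HY & <- & <- & <- & <- & pr & <-).
  set (g := fun t => sqrt (a t ^ 2 + b t ^ 2)).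
  rewrite <- (RInt_Reals g 0 1 pr). set (l := RInt g 0 1).
  assert (Hg : forall t, continuous g t) by (apply continuous_speed; auto).
  assert (Hg0 : forall t, 0 <= g t) by (intro; apply sqrt_pos).
  assert (Hag : forall t, Rabs (a t) <= g t).
  { intro t. rewrite <- sqrt_Rsqr_abs. apply sqrt_le_1_alt. unfold Rsqr. nra. }
  assert (Hbg : forall t, Rabs (b t) <= g t).
  { intro t. rewrite <- sqrt_Rsqr_abs. apply sqrt_le_1_alt. unfold Rsqr. nra. }
  assert (Ha' : forall t, continuous a t) by (intro; apply continuity_pt_filterlim, Ha).
  assert (Hb' : forall t, continuous b t) by (intro; apply continuity_pt_filterlim, Hb).
  assert (HX' : forall t, continuous X t).
  { intro t. apply (@ex_derive_continuous R_AbsRing R_NormedModule).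
    exists (a t). apply is_derive_Reals, HX. }
  assert (Hl : 0 <= l) by (apply RInt_ge_0; [lra | apply ex_RInt_of_continuous | ]; auto).
  assert (Hdx : forall t, 0 <= t <= 1 -> Rabs (X t - X 0) <= l).
  { intros t Ht. eapply Rle_trans.
    - apply (abs_sub_le_RInt X a g); [lra | auto .. ].
    - apply RInt_le_of_nonneg; auto. }
  split; [exact Hl | split; [apply Hdx; lra |]].
  assert (HXb : forall t, 0 <= t <= 1 -> Rabs (X t * b t) <= (Rabs (X 0) + l) * g t).
  { intros t Ht. rewrite Rabs_mult.
    apply Rmult_le_compat; try apply Rabs_pos; [| apply Hbg].
    pose proof (Hdx t Ht). pose proof (Rabs_triang_inv (X t) (X 0)). lra. }
  eapply Rle_trans.
  - apply (abs_sub_le_RInt Y (fun t => X t * b t) (fun t => (Rabs (X 0) + l) * g t));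
      [lra | auto | intro; apply (continuous_mult X b); auto
      | intro; apply (continuous_mult (fun _ => _) g); [apply continuous_const | auto] | exact HXb].
  - apply Req_le. apply (@RInt_scal R_CompleteNormedModule), ex_RInt_of_continuous, Hg.
Qed.

Lemma Rinf_is_glb (E : R -> Prop) :
  (exists x, E x) -> (exists m, is_lower_bound E m) -> is_glb E (Rinf E).
Proof.
  intros [x Ex] [m Hm]. unfold Rinf. apply epsilon_spec.
  destruct (completeness (fun y => E (- y))) as [M [HM1 HM2]].
  - exists (- m). intros y Ey. apply Hm in Ey. lra.
  - exists (- x). rewrite Ropp_involutive. exact Ex.
  - exists (- M). split.
    + intros z Ez. rewrite <- (Ropp_involutive z) in Ez. apply HM1 in Ez. lra.
    + intros c Hc. enough (M <= - c) by lra.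
      apply HM2. intros y Ey. apply Hc in Ey. lra.
Qed.

Lemma Rsup_is_lub (E : R -> Prop) :
  (exists x, E x) -> (exists m, is_upper_bound E m) -> is_lub E (Rsup E).
Proof.
  intros He Hb. unfold Rsup. apply epsilon_spec.
  destruct (completeness E Hb He) as [M HM]. exists M; exact HM.
Qed.

Lemma dist_cc_ge (S T : pt -> Prop) (c : R) : (exists p, S p) -> (exists q, T q) ->
  (forall p q, S p -> T q -> c <= dcc p q) -> c <= dist_cc S T.
Proof.
  intros [p Sp] [q Tq] Hc. unfold dist_cc.
  apply Rinf_is_glb; [exists (dcc p q), p, q; auto | exists c |].
  - intros d (p' & q' & Sp' & Tq' & ->). auto.
  - intros d (p' & q' & Sp' & Tq' & ->). auto.
Qed.

Lemma diam_cc_le (S : pt -> Prop) (c : R) : (exists p, S p) ->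
  (forall p q, S p -> S q -> dcc p q <= c) -> diam_cc S <= c.
Proof.
  intros [p Sp] Hc. unfold diam_cc.
  apply Rsup_is_lub; [exists (dcc p p), p, p; auto | exists c |].
  - intros d (p' & q' & Sp' & Sq' & ->). auto.
  - intros d (p' & q' & Sp' & Sq' & ->). auto.
Qed.

(* With [x] affine from [x1] to [x2] and [b] constant, [y] gains
   [b * (x1 + x2) / 2], whence the choice of [b]. *)
Lemma horizontal_length_affine (x1 y1 x2 y2 : R) : x1 + x2 <> 0 ->
  horizontal_length (x1, y1) (x2, y2)
    (sqrt ((x2 - x1) ^ 2 + (2 * (y2 - y1) / (x1 + x2)) ^ 2)).
Proof.
  intro Hx. set (b := 2 * (y2 - y1) / (x1 + x2)).
  exists (fun _ => x2 - x1), (fun _ => b), (fun t => x1 + (x2 - x1) * t),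
    (fun t => y1 + b * (x1 * t + (x2 - x1) * t ^ 2 / 2)).
  split; [apply continuity_const; now intros |].
  split; [apply continuity_const; now intros |].
  split; [intro t; apply is_derive_Reals; auto_derive; [trivial | ring] |].
  split; [intro t; apply is_derive_Reals; auto_derive; [trivial | field] |].
  simpl. split; [field |]. split; [field |]. split; [field |].
  split; [unfold b; field; exact Hx |].
  assert (pr : Riemann_integrable (fun _ => sqrt ((x2 - x1) ^ 2 + b ^ 2)) 0 1).
  { apply continuity_implies_RiemannInt; [lra |].
    intros. apply continuity_pt_const. now intros. }
  exists pr. rewrite <- RInt_Reals, RInt_const. simpl. unfold scal; simpl; unfold mult; simpl. ring.
Qed.

Lemma dcc_le_length (p q : pt) (l : R) : horizontal_length p q l -> dcc p q <= l.
Proof.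
  intro Hl. apply (Rinf_is_glb (horizontal_length p q)); [exists l; exact Hl | | exact Hl].
  exists 0. intros l' Hl'. apply (horizontal_length_bounds _ _ _ Hl').
Qed.

Lemma dcc_ge_of_lengths (p q : pt) (c : R) : fst p + fst q <> 0 ->
  (forall l, horizontal_length p q l -> c <= l) -> c <= dcc p q.
Proof.
  destruct p as [x1 y1], q as [x2 y2]. simpl. intros Hx Hc.
  apply (Rinf_is_glb (horizontal_length (x1, y1) (x2, y2))); [| | exact Hc].
  - eexists. apply horizontal_length_affine, Hx.
  - exists 0. intros l Hl. apply (horizontal_length_bounds _ _ _ Hl).
Qed.

Lemma dcc_ge_abs_dx (p q : pt) : fst p + fst q <> 0 -> Rabs (fst q - fst p) <= dcc p q.
Proof.
  intro Hx. apply dcc_ge_of_lengths; [exact Hx |].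
  intros l Hl. apply (horizontal_length_bounds _ _ _ Hl).
Qed.

Lemma dcc_le_separated (p q : pt) (d : R) : 0 < d -> d <= Rabs (fst p + fst q) ->
  dcc p q <= sqrt ((fst q - fst p) ^ 2 + (2 * (snd q - snd p) / d) ^ 2).
Proof.
  destruct p as [x1 y1], q as [x2 y2]. cbn [fst snd]. intros Hd Hsum.
  assert (Hx : x1 + x2 <> 0) by (intro E; rewrite E, Rabs_R0 in Hsum; lra).
  eapply Rle_trans; [apply dcc_le_length, horizontal_length_affine, Hx |].
  apply sqrt_le_1_alt. apply Rplus_le_compat_l.
  rewrite <- (Rsqr_pow2 (2 * (y2 - y1) / (x1 + x2))), <- (Rsqr_pow2 (2 * (y2 - y1) / d)).
  apply Rsqr_le_abs_1.
  unfold Rdiv. rewrite !Rabs_mult, (Rabs_inv d), (Rabs_pos_eq d) by lra.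
  apply Rmult_le_compat_l; [apply Rmult_le_pos; apply Rabs_pos |].
  rewrite Rabs_inv. apply Rinv_le_contravar; lra.
Qed.

Lemma sx_pos (k : rindex) : 0 < sx k.
Proof. apply powerRZ_lt. lra. Qed.

Lemma sy_eq_sx_sqr (k : rindex) : sy k = sx k * sx k.
Proof. unfold sy, sx. rewrite <- powerRZ_add by lra. f_equal. lia. Qed.

Lemma in_rect_corner (k : rindex) :
  in_rect k (sx k * IZR (snd (fst k)), sy k * IZR (snd k)).
Proof.
  pose proof (sx_pos k). unfold in_rect. rewrite sy_eq_sx_sqr. simpl. nra.
Qed.

Lemma in_rect_sides (k : rindex) (p q : pt) : in_rect k p -> in_rect k q ->
  Rabs (fst q - fst p) <= sx k /\ Rabs (snd q - snd p) <= sx k * sx k.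
Proof.
  unfold in_rect. rewrite sy_eq_sx_sqr.
  intros [[? ?] [? ?]] [[? ?] [? ?]]. split; apply Rabs_le; nra.
Qed.

Definition in_box (sg s y0 : R) (p : pt) : Prop :=
  s <= sg * fst p <= 2 * s /\ y0 <= snd p <= y0 + s * s.

Section Whitney.

Variable W : rindex -> Prop.
Hypothesis HW : whitney_family W.

Lemma whitney_rect_off_A (k : rindex) (p : pt) : W k -> in_rect k p -> ~ in_A p.
Proof. intros Wk Hp. apply (proj1 HW). exists k. auto. Qed.

(* Far from [A] the distance to [A] exceeds the diameter, which the Whitney
   condition [dist <= diam] forbids. *)
Lemma whitney_rect_near_A (k : rindex) (sg c : R) : W k -> (sg = 1 \/ sg = -1) ->
  (forall p, in_rect k p -> c <= sg * fst p) -> c < 2 * sx k.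
Proof.
  intros Wk Hsg Hc. pose proof (sx_pos k) as Hs. set (s := sx k) in *.
  apply Rnot_le_lt. intro Hfar.
  assert (Habs : forall x, sg * x <= Rabs x).
  { intro x. unfold Rabs. destruct (Rcase_abs x), Hsg; subst; lra. }
  assert (Hne : exists p, in_rect k p) by (eexists; apply in_rect_corner).
  assert (Hdist : c <= dist_cc (in_rect k) in_A).
  { apply dist_cc_ge; [exact Hne | exists (0, 0); reflexivity |].
    intros p q Hp Hq. unfold in_A in Hq.
    pose proof (Hc p Hp). pose proof (Habs (fst p)).
    assert (Hx : Rabs (fst q - fst p) <= dcc p q)
      by (apply dcc_ge_abs_dx; rewrite Hq, Rplus_0_r; intro E; rewrite E, Rmult_0_r in *; lra).
    rewrite Hq, Rminus_0_l, Rabs_Ropp in Hx. lra. }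
  assert (Hdiam : diam_cc (in_rect k) <= 3 * s / 2).
  { apply diam_cc_le; [exact Hne |]. intros p q Hp Hq.
    destruct (in_rect_sides k p q Hp Hq) as [Hdx Hdy]. fold s in Hdx, Hdy.
    pose proof (Hc p Hp). pose proof (Hc q Hq). pose proof (Habs (fst p + fst q)).
    eapply Rle_trans; [apply (dcc_le_separated p q (4 * s)); lra |].
    rewrite <- (sqrt_pow2 (3 * s / 2)) by lra. apply sqrt_le_1_alt.
    assert (Hr : Rabs (2 * (snd q - snd p) / (4 * s)) <= s / 2).
    { unfold Rdiv.
      rewrite Rabs_mult, Rabs_inv, Rabs_mult, (Rabs_pos_eq 2), (Rabs_pos_eq (4 * s)) by lra.
      apply Rmult_le_reg_r with (4 * s); [lra |].
      rewrite Rmult_assoc, Rinv_l, Rmult_1_r by lra. nra. }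
    pose proof (pow_maj_Rabs _ _ 2 Hr). pose proof (pow_maj_Rabs _ _ 2 Hdx). nra. }
  destruct (proj2 (proj2 HW) k Wk) as [Hdd _]. lra.
Qed.

Lemma whitney_rect_in_box (k : rindex) : W k ->
  exists sg y0, (sg = 1 \/ sg = -1) /\ forall p, in_rect k p -> in_box sg (sx k) y0 p.
Proof.
  intro Wk. pose proof (sx_pos k) as Hs. destruct k as [[j m] n].
  assert (Hcorner := in_rect_corner (j, m, n)).
  assert (Hm : (m >= 2 \/ m <= -3 \/ m = 0 \/ m = -1 \/ m = 1 \/ m = -2)%Z) by lia.
  destruct Hm as [Hm | [Hm | [-> | [-> | [-> | ->]]]]].
  - exfalso. apply IZR_ge in Hm.
    enough (sx (j, m, n) * IZR m < 2 * sx (j, m, n)) by nra.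
    apply (whitney_rect_near_A _ 1 _ Wk (or_introl eq_refl)).
    intros p [[Hp _] _]. simpl in Hp. lra.
  - exfalso. apply IZR_le in Hm.
    enough (- (sx (j, m, n) * (IZR m + 1)) < 2 * sx (j, m, n)) by nra.
    apply (whitney_rect_near_A _ (-1) _ Wk (or_intror eq_refl)).
    intros p [[_ Hp] _]. simpl in Hp. lra.
  - exfalso. apply (whitney_rect_off_A _ (0, sy (j, 0%Z, n) * IZR n) Wk); [| reflexivity].
    unfold in_rect in *. simpl in *. lra.
  - exfalso. apply (whitney_rect_off_A _ (0, sy (j, (-1)%Z, n) * IZR n) Wk); [| reflexivity].
    unfold in_rect in *. simpl in *. lra.
  - exists 1, (sy (j, 1%Z, n) * IZR n). split; [now left |].
    intros p [Hx Hy]. unfold in_box. rewrite sy_eq_sx_sqr in Hy |- *. simpl in *. nra.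
  - exists (-1), (sy (j, (-2)%Z, n) * IZR n). split; [now right |].
    intros p [Hx Hy]. unfold in_box. rewrite sy_eq_sx_sqr in Hy |- *. simpl in *. nra.
Qed.

End Whitney.

Definition in_wide_box (sg s y0 : R) (p : pt) : Prop :=
  s / 4 <= sg * fst p <= 8 * s /\ Rabs (snd p - y0) <= 21 * (s * s).

Lemma in_box_overlap (sg s y0 sg' s' y0' : R) (z : pt) :
  (sg = 1 \/ sg = -1) -> (sg' = 1 \/ sg' = -1) -> 0 < s -> 0 < s' ->
  in_box sg s y0 z -> in_box sg' s' y0' z ->
  sg' = sg /\ s' <= 2 * s /\ s <= 2 * s' /\ y0 - s' * s' <= y0' <= y0 + s * s.
Proof.
  intros Hsg Hsg' Hs Hs' [Hx Hy] [Hx' Hy'].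
  destruct Hsg as [-> | ->], Hsg' as [-> | ->]; repeat split; lra.
Qed.

Lemma Qstarstar_in_wide_box (W : rindex -> Prop) (i : rindex) :
  whitney_family W -> W i ->
  exists sg y0, (sg = 1 \/ sg = -1) /\
    forall p, Qstarstar W i p -> in_wide_box sg (sx i) y0 p.
Proof.
  intros HW Wi. pose proof (sx_pos i) as Hs. set (s := sx i) in *.
  destruct (whitney_rect_in_box W HW i Wi) as (sg & y0 & Hsg & Hi).
  exists sg, y0. split; [exact Hsg |].
  intros p (k' & Wk' & (z' & Hk'z' & k & Wk & (z & Hkz & Hiz) & Hkz') & Hk'p).
  destruct (whitney_rect_in_box W HW k Wk) as (sk & yk & Hsk & Hk).
  destruct (whitney_rect_in_box W HW k' Wk') as (sk' & yk' & Hsk' & Hk').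
  pose proof (sx_pos k) as Hsk0. pose proof (sx_pos k') as Hsk'0.
  destruct (in_box_overlap _ _ _ _ _ _ z Hsg Hsk Hs Hsk0 (Hi z Hiz) (Hk z Hkz))
    as (-> & ? & ? & ?).
  destruct (in_box_overlap _ _ _ _ _ _ z' Hsg Hsk' Hsk0 Hsk'0 (Hk z' Hkz') (Hk' z' Hk'z'))
    as (-> & ? & ? & ?).
  destruct (Hk' p Hk'p) as [Hx Hy].
  assert (sx k * sx k <= 4 * (s * s)) by nra.
  assert (sx k' * sx k' <= 16 * (s * s)) by nra.
  split; [lra |]. apply Rabs_le. lra.
Qed.

Definition rescale (s : R) (p : pt) : nat -> R :=
  fun n => match n with O => fst p | _ => snd p / s end.

Lemma eucl_dist_rescale (s : R) (p q : pt) : s <> 0 ->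
  eucl_dist 2 (rescale s p) (rescale s q)
  = sqrt ((fst p - fst q) ^ 2 + ((snd p - snd q) / s) ^ 2).
Proof. intro Hs. unfold eucl_dist. simpl. f_equal. field. exact Hs. Qed.

Lemma sqrt_le_mult_sqrt (k A B : R) : 0 <= k -> 0 <= B -> A <= k ^ 2 * B ->
  sqrt A <= k * sqrt B.
Proof.
  intros Hk HB HA. rewrite <- (sqrt_pow2 k Hk), <- sqrt_mult by nra.
  apply sqrt_le_1_alt, HA.
Qed.

Lemma dcc_le_rescale (s : R) (p q : pt) : 0 < s -> s / 2 <= Rabs (fst p + fst q) ->
  dcc p q <= 4 * eucl_dist 2 (rescale s p) (rescale s q).
Proof.
  intros Hs Hsum. rewrite eucl_dist_rescale by lra.
  eapply Rle_trans; [apply (dcc_le_separated p q (s / 2)); lra |].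
  apply sqrt_le_mult_sqrt; [lra | apply Rplus_le_le_0_compat; apply pow2_ge_0 |].
  replace (2 * (snd q - snd p) / (s / 2)) with (- 4 * ((snd p - snd q) / s)) by (field; lra).
  replace (fst q - fst p) with (- (fst p - fst q)) by ring.
  pose proof (pow2_ge_0 (fst p - fst q)). nra.
Qed.

(* A horizontal curve of length [l <= 8 s] keeps [|x| <= 16 s], so it moves [y]
   by at most [16 s l]; a longer curve is long compared to the size of the box. *)
Lemma rescale_le_dcc (sg s y0 : R) (p q : pt) : (sg = 1 \/ sg = -1) -> 0 < s ->
  in_wide_box sg s y0 p -> in_wide_box sg s y0 q ->
  eucl_dist 2 (rescale s p) (rescale s q) <= 17 * dcc p q.
Proof.
  destruct p as [x1 y1], q as [x2 y2]. unfold in_wide_box. cbn [fst snd].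
  intros Hsg Hs [Hx1 Hy1] [Hx2 Hy2]. rewrite eucl_dist_rescale by lra. cbn [fst snd].
  assert (Hx : Rabs x1 <= 8 * s /\ Rabs (x1 - x2) <= 8 * s /\ x1 + x2 <> 0).
  { destruct Hsg as [-> | ->]; repeat split; try apply Rabs_le; lra. }
  destruct Hx as (Hx1' & Hdx & Hsum).
  set (w := (y1 - y2) / s). assert (Hyw : y1 - y2 = w * s) by (unfold w; field; lra).
  assert (Hw : Rabs w <= 42 * s).
  { apply Rmult_le_reg_r with s; [exact Hs |].
    rewrite <- (Rabs_pos_eq s) at 1 by lra. rewrite <- Rabs_mult, <- Hyw.
    replace (y1 - y2) with ((y1 - y0) + - (y2 - y0)) by ring.
    eapply Rle_trans; [apply Rabs_triang |]. rewrite Rabs_Ropp. nra. }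
  enough (H : sqrt ((x1 - x2) ^ 2 + w ^ 2) / 17 <= dcc (x1, y1) (x2, y2)) by lra.
  apply dcc_ge_of_lengths; [exact Hsum |]. intros l Hl.
  destruct (horizontal_length_bounds _ _ _ Hl) as (Hl0 & Hlx & Hly). cbn [fst snd] in Hlx, Hly.
  rewrite Rabs_minus_sym in Hlx.
  rewrite Rabs_minus_sym, Hyw, Rabs_mult, (Rabs_pos_eq s) in Hly by lra.
  enough (Hsq : sqrt ((x1 - x2) ^ 2 + w ^ 2) <= sqrt ((17 * l) ^ 2))
    by (rewrite sqrt_pow2 in Hsq; lra).
  apply sqrt_le_1_alt.
  pose proof (Rabs_pos w).
  destruct (Rle_lt_dec l (8 * s)) as [Hshort | Hlong].
  - assert (Hw' : Rabs w <= 16 * l) by nra.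
    pose proof (pow_maj_Rabs _ _ 2 Hlx). pose proof (pow_maj_Rabs _ _ 2 Hw'). nra.
  - pose proof (pow_maj_Rabs _ _ 2 Hdx). pose proof (pow_maj_Rabs _ _ 2 Hw). nra.
Qed.

Theorem lemma4p8 (W : rindex -> Prop) (HW : whitney_family W) :
  exists (L : R) (N' : nat), 1 <= L /\
    forall i : rindex, W i ->
      exists f : pt -> nat -> R, bilipschitz_embedding L N' (Qstarstar W i) f.
Proof.
  exists 17, 2%nat. split; [lra |]. intros i Wi.
  destruct (Qstarstar_in_wide_box W i HW Wi) as (sg & y0 & Hsg & Hbox).
  pose proof (sx_pos i) as Hs.
  exists (rescale (sx i)). intros p q Hp Hq.
  specialize (Hbox p Hp) as Hp'. specialize (Hbox q Hq) as Hq'.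
  assert (Hsum : sx i / 2 <= Rabs (fst p + fst q)).
  { destruct Hp' as [Hp' _], Hq' as [Hq' _].
    destruct Hsg as [-> | ->]; [rewrite Rabs_pos_eq | rewrite Rabs_left]; lra. }
  pose proof (dcc_le_rescale (sx i) p q Hs Hsum).
  pose proof (rescale_le_dcc sg (sx i) y0 p q Hsg Hs Hp' Hq').
  pose proof (sqrt_pos ((fst p - fst q) ^ 2 + ((snd p - snd q) / sx i) ^ 2)).
  rewrite eucl_dist_rescale in * by lra. split; lra.
Qed.
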